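(* Let $\triangle ABC$ be a triangle with side lengths $a=|BC|$, $b=|CA|$, $c=|AB|$ satisfying $a>b>c$, and with angles $\alpha=\angle A$, $\beta=\angle B$, $\gamma=\angle C$ (so $\alpha>\beta>\gamma$). For each side $x\in\{a,b,c\}$ that admits an inscribed equilateral triangle with one side lying on $x$, let $T_x$ be such an inscribed equilateral triangle of largest area on side $x$. Then: (Max) Among the sides admitting such a triangle, the largest area of $T_x$ is attained exactly on the long side $a$ when $\beta\neq 60^\circ$, and exactly on the sides $a$ and $c$ when $\beta=60^\circ$. (Min) The smallest area of $T_x$ (over the sides admitting such a triangle) is attained: A. exactly on side $c$ when $\alpha>120^\circ$, and exactly on sides $b$ and $c$ when $\alpha=120^\circ$; B. exactly on side $b$ when $60^\circ<\alpha<120^\circ$ and $\beta<60^\circ$; C. exactly on side $b$ when $\beta\ge 60^\circ$.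
   Context: An equilateral triangle is inscribed in $\triangle ABC$ if all three of its vertices lie on the boundary of $\triangle ABC$. An inscribed equilateral triangle ''on side $x$'' is one having one of its sides contained in the side $x$ of $\triangle ABC$. If both angles of $\triangle ABC$ at the endpoints of side $x$ exceed $60^\circ$, no inscribed equilateral triangle exists on that side, and that side is excluded from the comparison. The inscribed equilateral triangle of largest area among the (at most three) triangles $T_a,T_b,T_c$ is called the max inscribed equilateral triangle, and the one of smallest area the min inscribed equilateral triangle. *)

From Stdlib Require Export Reals Lra.
Open Scope R_scope.

Definition pt : Type := (R * R)%type.

Definition dist (P Q : pt) : R :=
  sqrt ((fst Q - fst P) ^ 2 + (snd Q - snd P) ^ 2).

Definition on_seg (X Y P : pt) : Prop :=
  exists t : R, 0 <= t <= 1 /\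
    P = (fst X + t * (fst Y - fst X), snd X + t * (snd Y - snd X)).

Definition on_boundary (A B C P : pt) : Prop :=
  on_seg A B P \/ on_seg B C P \/ on_seg C A P.

Definition collinear (A B C : pt) : Prop :=
  (fst B - fst A) * (snd C - snd A) - (snd B - snd A) * (fst C - fst A) = 0.

Definition area (P Q S : pt) : R :=
  Rabs ((fst Q - fst P) * (snd S - snd P) - (snd Q - snd P) * (fst S - fst P)) / 2.

Definition equilateral (P Q R : pt) : Prop :=
  P <> Q /\ dist P Q = dist Q R /\ dist Q R = dist R P.

Definition angle (V X Y : pt) : R :=
  acos (((fst X - fst V) * (fst Y - fst V) + (snd X - snd V) * (snd Y - snd V))
        / (dist V X * dist V Y)).

Definition inscribed_eq_on (A B C X Y P Q R : pt) : Prop :=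
  equilateral P Q R /\ on_seg X Y P /\ on_seg X Y Q /\
  on_boundary A B C P /\ on_boundary A B C Q /\ on_boundary A B C R.

Definition admits (A B C X Y : pt) : Prop :=
  exists P Q R, inscribed_eq_on A B C X Y P Q R.

Definition max_area_on (A B C X Y : pt) (m : R) : Prop :=
  (exists P Q R, inscribed_eq_on A B C X Y P Q R /\ area P Q R = m) /\
  (forall P Q R, inscribed_eq_on A B C X Y P Q R -> area P Q R <= m).


(* An equilateral triangle PQT inscribed in a triangle XYZ with its base PQ on
   the side XY has its apex T on one of the two other sides, say
   T = X + w (Z - X).  Let k be twice the area of XYZ and p, q be sqrt 3 times
   the cotangents of the angles at X and Y.  The base is then forced: PQ is
   centred at the foot of T, the triangle has area k w^2 / (p + q), and it fits
   in XY exactly when p >= 1 (the angle at X is at most 60 degrees) and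
   w (p + 1) <= p + q.  So the largest one has area
   k min(1, (p + q) / (p + 1))^2 / (p + q), the apex lying on the side through
   the larger base angle not exceeding 60 degrees.
   For a triangle with a > b > c the numbers x, y, z attached in this way to
   its angles alpha, beta, gamma satisfy xy + yz + zx = 3, and the differences
   of the three maxima factor through z - 1, 1 - y and x + 1, whose signs
   compare gamma, beta and alpha with 60, 60 and 120 degrees. *)

Definition sqdist (P Q : pt) : R := (fst Q - fst P) ^ 2 + (snd Q - snd P) ^ 2.

Definition cross (P Q T : pt) : R :=
  (fst Q - fst P) * (snd T - snd P) - (snd Q - snd P) * (fst T - fst P).

Definition dot (V X Y : pt) : R :=
  (fst X - fst V) * (fst Y - fst V) + (snd X - snd V) * (snd Y - snd V).

Definition lerp (X Y : pt) (t : R) : pt :=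
  (fst X + t * (fst Y - fst X), snd X + t * (snd Y - snd X)).

(* [sqrt 3] times the cotangent of the angle at [V]: the angle is below, at or
   above 60 degrees as this is above, at or below 1, and likewise for 120
   degrees and -1. *)
Definition sqrt3_cot (V X Y : pt) : R := sqrt 3 * dot V X Y / Rabs (cross V X Y).

Lemma sqrt3_pos : 0 < sqrt 3.
Proof. apply sqrt_lt_R0; lra. Qed.

Lemma sqrt3_sq : sqrt 3 ^ 2 = 3.
Proof. rewrite <- Rsqr_pow2; apply Rsqr_sqrt; lra. Qed.

Lemma sqdist_sym P Q : sqdist P Q = sqdist Q P.
Proof. unfold sqdist; ring. Qed.

Lemma sqdist_nonneg P Q : 0 <= sqdist P Q.
Proof. unfold sqdist; apply Rplus_le_le_0_compat; apply pow2_ge_0. Qed.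

Lemma sqdist_eq0 P Q : sqdist P Q = 0 -> P = Q.
Proof.
  destruct P as [p1 p2], Q as [q1 q2]; unfold sqdist; simpl; intro H.
  assert (H1 := pow2_ge_0 (q1 - p1)); assert (H2 := pow2_ge_0 (q2 - p2)).
  f_equal; nra.
Qed.

Lemma cross_rot X Y Z : cross Y Z X = cross X Y Z.
Proof. unfold cross; ring. Qed.

Lemma cross_swap X Y Z : cross Y X Z = - cross X Y Z.
Proof. unfold cross; ring. Qed.

Lemma sqrt3_cot_swap V X Y : sqrt3_cot V X Y = sqrt3_cot V Y X.
Proof.
  unfold sqrt3_cot.
  replace (cross V Y X) with (- cross V X Y) by (unfold cross; ring).
  rewrite Rabs_Ropp; unfold dot; f_equal; f_equal; ring.
Qed.

Lemma sqdist_pos P Q : P <> Q -> 0 < sqdist P Q.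
Proof.
  intro HPQ; destruct (sqdist_nonneg P Q) as [|E]; [assumption|].
  symmetry in E; apply sqdist_eq0 in E; contradiction.
Qed.

Lemma sqdist_pos_of_cross X Y Z : cross X Y Z <> 0 -> 0 < sqdist X Y.
Proof. intro HK; apply sqdist_pos; intros ->; apply HK; unfold cross; ring. Qed.

Lemma on_seg_sym X Y P : on_seg X Y P -> on_seg Y X P.
Proof.
  intros [t [Ht ->]]; exists (1 - t); split; [lra|].
  f_equal; ring.
Qed.

Lemma on_seg_lerp X Y t : 0 <= t <= 1 -> on_seg X Y (lerp X Y t).
Proof. intro Ht; exists t; split; [exact Ht | reflexivity]. Qed.

Lemma area_cross P Q T : area P Q T = Rabs (cross P Q T) / 2.
Proof. reflexivity. Qed.

Lemma equilateral_sqdist P Q T :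
  equilateral P Q T <-> P <> Q /\ sqdist P Q = sqdist Q T /\ sqdist Q T = sqdist T P.
Proof.
  unfold equilateral, dist; fold (sqdist P Q) (sqdist Q T) (sqdist T P).
  split; intros (HPQ & H1 & H2); repeat split; try assumption.
  - apply sqrt_inj; auto using sqdist_nonneg.
  - apply sqrt_inj; auto using sqdist_nonneg.
  - now rewrite H1.
  - now rewrite H2.
Qed.

Lemma equilateral_cross P Q T : equilateral P Q T -> cross P Q T <> 0.
Proof.
  rewrite equilateral_sqdist; intros (HPQ & H1 & H2) E.
  assert (Hs := sqdist_pos P Q HPQ).
  assert (Hlag : cross P Q T ^ 2 + dot P Q T ^ 2 = sqdist P Q * sqdist P T)
    by (unfold cross, dot, sqdist; ring).
  assert (Hcos : 2 * dot P Q T = sqdist P Q + sqdist P T - sqdist Q T)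
    by (unfold dot, sqdist; ring).
  rewrite (sqdist_sym P T), <- H2, <- H1 in Hlag, Hcos; rewrite E in Hlag.
  nra.
Qed.

Lemma sqdist_cot X Y Z : cross X Y Z <> 0 ->
  sqrt 3 * sqdist X Y = Rabs (cross X Y Z) * (sqrt3_cot X Y Z + sqrt3_cot Y Z X).
Proof.
  intro HK; assert (Hk : 0 < Rabs (cross X Y Z)) by now apply Rabs_pos_lt.
  unfold sqrt3_cot; rewrite (cross_rot X Y Z).
  field_simplify; [|intro; lra].
  unfold sqdist, dot; ring.
Qed.

Lemma cot_sum_pos X Y Z : cross X Y Z <> 0 -> 0 < sqrt3_cot X Y Z + sqrt3_cot Y Z X.
Proof.
  intro HK; assert (Hk : 0 < Rabs (cross X Y Z)) by now apply Rabs_pos_lt.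
  assert (HL := sqdist_pos_of_cross X Y Z HK).
  assert (H := sqdist_cot X Y Z HK). assert (Hs := sqrt3_pos).
  nra.
Qed.

Lemma sqrt3_cot_identity A B C : cross A B C <> 0 ->
  sqrt3_cot A B C * sqrt3_cot B C A + sqrt3_cot B C A * sqrt3_cot C A B
  + sqrt3_cot C A B * sqrt3_cot A B C = 3.
Proof.
  intro HK; assert (Hk : 0 < Rabs (cross A B C)) by now apply Rabs_pos_lt.
  unfold sqrt3_cot; rewrite (cross_rot A B C), (cross_rot B C A), (cross_rot A B C).
  field_simplify; [|intro; lra]. rewrite sqrt3_sq.
  rewrite pow2_abs.
  replace (3 * dot A B C * dot B C A + 3 * dot A B C * dot C A B + 3 * dot B C A * dot C A B)
    with (3 * cross A B C ^ 2) by (unfold dot, cross; ring).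
  field; assumption.
Qed.

(** * Equilateral triangles with base on a side *)

Lemma equilateral_base_params_iff u v w p r : r <> 0 -> u <> v ->
  ((v - u) ^ 2 * r ^ 2 = (w * p - v * r) ^ 2 + 3 * w ^ 2 /\
   (w * p - v * r) ^ 2 + 3 * w ^ 2 = (w * p - u * r) ^ 2 + 3 * w ^ 2) <->
  (u * r = w * (p - 1) /\ v * r = w * (p + 1)) \/
  (u * r = w * (p + 1) /\ v * r = w * (p - 1)).
Proof.
  intros Hr Huv; split.
  - intros [H1 H2].
    assert (Hmid : (u + v) * r = 2 * w * p).
    { assert (E : (u - v) * r * (2 * w * p - (u + v) * r) = 0).
      { transitivity ((w * p - v * r) ^ 2 - (w * p - u * r) ^ 2); [ring | lra]. }
      apply Rmult_integral in E as [E | E]; [|lra].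
      apply Rmult_integral in E as [E | E]; exfalso; [apply Huv | apply Hr]; lra. }
    assert (Hhalf : ((v - u) * r - 2 * w) * ((v - u) * r + 2 * w) = 0).
    { replace (w * p) with ((u + v) * r / 2) in H1 by lra.
      transitivity (4 / 3 * ((v - u) ^ 2 * r ^ 2 - (((u + v) * r / 2 - v * r) ^ 2 + 3 * w ^ 2)));
        [field | lra]. }
    apply Rmult_integral in Hhalf as [E | E]; [left | right]; split; lra.
  - replace ((v - u) ^ 2 * r ^ 2) with ((v * r - u * r) ^ 2) by ring.
    intros [[Hu Hv] | [Hu Hv]]; rewrite Hu, Hv; split; ring.
Qed.

(* In a triangle [XYZ] whose angles at [X] and [Y] have [sqrt3_cot] [p] and [q],
   [apex_fits p q w] says that [lerp X Z w] is the apex of an equilateral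
   triangle with base on [XY]; that base runs from [w (p - 1) / (p + q)] to
   [w (p + 1) / (p + q)] along [XY]. *)
Definition apex_fits (p q w : R) : Prop := 0 < w <= 1 /\ 1 <= p /\ w * (p + 1) <= p + q.

Section Apex.

Variables X Y Z : pt.
Hypothesis XYZ : cross X Y Z <> 0.

Local Notation p := (sqrt3_cot X Y Z).
Local Notation q := (sqrt3_cot Y Z X).
Local Notation k := (Rabs (cross X Y Z)).

Lemma sqdist_lerp_base u v : sqdist (lerp X Y u) (lerp X Y v) = (v - u) ^ 2 * sqdist X Y.
Proof. unfold sqdist, lerp; simpl; ring. Qed.

Lemma sqdist_lerp_apex u w :
  (p + q) ^ 2 * sqdist (lerp X Y u) (lerp X Z w) =
  sqdist X Y * ((w * p - u * (p + q)) ^ 2 + 3 * w ^ 2).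
Proof.
  assert (Hk : 0 < k) by now apply Rabs_pos_lt.
  assert (Hr : p + q = sqrt 3 * sqdist X Y / k) by (rewrite (sqdist_cot X Y Z XYZ); field; lra).
  assert (Hraw : sqdist X Y * sqdist (lerp X Y u) (lerp X Z w) =
                 (w * dot X Y Z - u * sqdist X Y) ^ 2 + w ^ 2 * k ^ 2).
  { rewrite pow2_abs; unfold sqdist, lerp, dot, cross; simpl; ring. }
  rewrite Hr; unfold sqrt3_cot.
  set (s := sqrt 3) in *; set (L := sqdist X Y) in *; set (d := dot X Y Z) in *.
  set (SQ := sqdist (lerp X Y u) (lerp X Z w)) in *.
  replace ((s * L / k) ^ 2 * SQ) with (s ^ 2 / k ^ 2 * L * (L * SQ)) by (field; lra).
  replace ((w * (s * d / k) - u * (s * L / k)) ^ 2) with (s ^ 2 * (w * d - u * L) ^ 2 / k ^ 2)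
    by (field; lra).
  rewrite Hraw; unfold s; rewrite sqrt3_sq; field; lra.
Qed.

Lemma equilateral_lerp_iff u v w :
  equilateral (lerp X Y u) (lerp X Y v) (lerp X Z w) <->
  u <> v /\ ((u * (p + q) = w * (p - 1) /\ v * (p + q) = w * (p + 1)) \/
             (u * (p + q) = w * (p + 1) /\ v * (p + q) = w * (p - 1))).
Proof.
  assert (HL := sqdist_pos_of_cross X Y Z XYZ).
  assert (Hr2 : 0 < (p + q) ^ 2) by (apply pow_lt, cot_sum_pos, XYZ).
  assert (E1 : (p + q) ^ 2 * sqdist (lerp X Y u) (lerp X Y v) =
               sqdist X Y * ((v - u) ^ 2 * (p + q) ^ 2)) by (rewrite sqdist_lerp_base; ring).
  assert (E2 := sqdist_lerp_apex v w).
  assert (E3 := sqdist_lerp_apex u w).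
  rewrite equilateral_sqdist, (sqdist_sym (lerp X Z w)).
  assert (Hne : lerp X Y u <> lerp X Y v <-> u <> v).
  { split; intros H E; apply H; [now subst |].
    assert (E' : (v - u) ^ 2 * sqdist X Y = 0)
      by (rewrite <- sqdist_lerp_base, E; unfold sqdist; ring).
    apply Rmult_integral in E' as [E' | E']; [nra | lra]. }
  assert (Hscale : forall a b A B, (p + q) ^ 2 * a = sqdist X Y * A ->
            (p + q) ^ 2 * b = sqdist X Y * B -> (a = b <-> A = B)).
  { intros a b A B Ha Hb; split; intro E.
    - apply (Rmult_eq_reg_l (sqdist X Y)); [now rewrite <- Ha, <- Hb, E | lra].
    - apply (Rmult_eq_reg_l ((p + q) ^ 2)); [now rewrite Ha, Hb, E | lra]. }
  rewrite Hne, (Hscale _ _ _ _ E1 E2), (Hscale _ _ _ _ E2 E3).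
  split; intros [Huv H]; split; try exact Huv;
    apply (equilateral_base_params_iff u v w p (p + q)); auto;
    apply Rgt_not_eq, cot_sum_pos, XYZ.
Qed.

Lemma area_equilateral_lerp u v w : 0 <= w ->
  (u * (p + q) = w * (p - 1) /\ v * (p + q) = w * (p + 1)) \/
  (u * (p + q) = w * (p + 1) /\ v * (p + q) = w * (p - 1)) ->
  area (lerp X Y u) (lerp X Y v) (lerp X Z w) = k * w ^ 2 / (p + q).
Proof.
  intros Hw Hpar.
  assert (Hr := cot_sum_pos X Y Z XYZ).
  assert (Hwidth : Rabs (v - u) * (p + q) = 2 * w).
  { rewrite <- (Rabs_pos_eq (p + q)) by lra; rewrite <- Rabs_mult.
    destruct Hpar as [[Hu Hv] | [Hu Hv]].
    - replace ((v - u) * (p + q)) with (2 * w) by lra; apply Rabs_pos_eq; lra.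
    - replace ((v - u) * (p + q)) with (- (2 * w)) by lra.
      rewrite Rabs_Ropp; apply Rabs_pos_eq; lra. }
  rewrite area_cross.
  replace (cross (lerp X Y u) (lerp X Y v) (lerp X Z w)) with ((v - u) * w * cross X Y Z)
    by (unfold cross, lerp; simpl; ring).
  rewrite !Rabs_mult, (Rabs_pos_eq w Hw).
  apply (Rmult_eq_reg_r (p + q)); [|lra].
  replace (Rabs (v - u) * w * k / 2 * (p + q)) with (Rabs (v - u) * (p + q) * w * k / 2) by field.
  rewrite Hwidth; field; lra.
Qed.

Lemma equilateral_apex P Q w :
  on_seg X Y P -> on_seg X Y Q -> 0 <= w <= 1 -> equilateral P Q (lerp X Z w) ->
  apex_fits p q w /\ area P Q (lerp X Z w) = k * w ^ 2 / (p + q).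
Proof.
  intros [u [Hu ->]] [v [Hv ->]] Hw Heq; fold (lerp X Y u) (lerp X Y v) in *.
  apply equilateral_lerp_iff in Heq as [Huv Hpar].
  assert (Hr := cot_sum_pos X Y Z XYZ).
  split; [|apply area_equilateral_lerp; [lra | exact Hpar]].
  assert (Hw0 : 0 < w).
  { destruct Hw as [[Hw0 | <-] _]; [exact Hw0 | exfalso; apply Huv].
    apply (Rmult_eq_reg_r (p + q)); [|lra].
    destruct Hpar as [[Hu' Hv'] | [Hu' Hv']]; lra. }
  split; [lra|].
  destruct Hpar as [[Hu' Hv'] | [Hu' Hv']]; split; nra.
Qed.

Lemma equilateral_apex_exists w : apex_fits p q w ->
  exists P Q, on_seg X Y P /\ on_seg X Y Q /\ equilateral P Q (lerp X Z w) /\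
    area P Q (lerp X Z w) = k * w ^ 2 / (p + q).
Proof.
  intros (Hw & Hp & Hreach).
  assert (Hr := cot_sum_pos X Y Z XYZ).
  set (u := w * (p - 1) / (p + q)); set (v := w * (p + 1) / (p + q)).
  assert (Hpar : (u * (p + q) = w * (p - 1) /\ v * (p + q) = w * (p + 1)) \/
                 (u * (p + q) = w * (p + 1) /\ v * (p + q) = w * (p - 1)))
    by (left; split; unfold u, v; field; lra).
  exists (lerp X Y u), (lerp X Y v).
  split; [apply on_seg_lerp; nra|]. split; [apply on_seg_lerp; nra|].
  split; [|apply area_equilateral_lerp; [lra | exact Hpar]].
  apply equilateral_lerp_iff; split; [|exact Hpar].
  intro E; rewrite E in Hpar; lra.
Qed.

End Apex.

(** * The largest inscribed equilateral triangle on a side *)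

Lemma Rle_div_iff a b c : 0 < c -> a <= b / c <-> a * c <= b.
Proof.
  intro Hc; replace b with (b / c * c) at 2 by (field; lra).
  split; intro H; [apply Rmult_le_compat_r | apply Rmult_le_reg_r with c]; lra.
Qed.

Definition apex_reach (p q : R) : R := Rmin 1 ((p + q) / (p + 1)).

Definition max_area_scaled (p q : R) : R := apex_reach p q ^ 2 / (p + q).

Lemma apex_fits_reach p q : 1 <= p -> 0 < p + q -> apex_fits p q (apex_reach p q).
Proof.
  intros Hp Hr; unfold apex_fits, apex_reach.
  assert (Hpos : 0 < (p + q) / (p + 1)) by (apply Rdiv_lt_0_compat; lra).
  split; [split; [apply Rmin_glb_lt; lra | apply Rmin_l]|]. split; [exact Hp|].
  apply (Rle_trans _ ((p + q) / (p + 1) * (p + 1))).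
  - apply Rmult_le_compat_r; [lra | apply Rmin_r].
  - right; field; lra.
Qed.

Lemma apex_fits_le_reach p q w : apex_fits p q w -> w <= apex_reach p q.
Proof.
  intros (Hw & Hp & Hreach); apply Rmin_glb; [lra|].
  apply Rle_div_iff; lra.
Qed.

Lemma apex_fits_swap p q w : 1 <= p -> p <= q -> apex_fits q p w -> apex_fits p q w.
Proof. intros Hp Hpq (Hw & Hq & Hreach); repeat split; nra. Qed.

Lemma max_area_scaled_full p q : 1 <= q -> 0 < p + 1 -> max_area_scaled p q = 1 / (p + q).
Proof.
  intros Hq Hp; unfold max_area_scaled, apex_reach.
  rewrite Rmin_left; [now rewrite pow1 | apply Rle_div_iff; lra].
Qed.

Lemma max_area_scaled_partial p q : q < 1 -> 0 < p + 1 -> 0 < p + q ->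
  max_area_scaled p q = (p + q) / (p + 1) ^ 2.
Proof.
  intros Hq Hp Hr; unfold max_area_scaled, apex_reach.
  rewrite Rmin_right; [field; lra|].
  apply Rlt_le, (Rmult_lt_reg_r (p + 1)); [lra|].
  replace ((p + q) / (p + 1) * (p + 1)) with (p + q) by (field; lra); lra.
Qed.

Lemma inscribed_eq_on_swap A B C X Y P Q T :
  inscribed_eq_on A B C Y X P Q T -> inscribed_eq_on A B C X Y P Q T.
Proof.
  intros (Heq & HP & HQ & Hbd).
  split; [exact Heq | split; [|split]]; auto using on_seg_sym.
Qed.

Lemma max_area_on_swap A B C X Y m :
  max_area_on A B C Y X m -> max_area_on A B C X Y m.
Proof.
  intros [(P & Q & T & HI & Harea) Hub]; split.
  - exists P, Q, T; split; [apply inscribed_eq_on_swap|]; assumption.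
  - intros P' Q' T' HI'; apply Hub, inscribed_eq_on_swap, HI'.
Qed.

Lemma max_area_on_unique A B C X Y m1 m2 :
  max_area_on A B C X Y m1 -> max_area_on A B C X Y m2 -> m1 = m2.
Proof.
  intros [(P1 & Q1 & T1 & H1 & <-) U1] [(P2 & Q2 & T2 & H2 & <-) U2].
  apply U1 in H2; apply U2 in H1; lra.
Qed.

Definition same_boundary (A B C X Y Z : pt) : Prop :=
  forall P, on_boundary A B C P <-> on_boundary X Y Z P.

Lemma max_area_on_admits A B C X Y m : max_area_on A B C X Y m -> admits A B C X Y.
Proof. intros [(P & Q & T & HI & _) _]; exists P, Q, T; exact HI. Qed.

Lemma same_boundary_swap A B C X Y Z :
  same_boundary A B C X Y Z -> same_boundary A B C Y X Z.
Proof.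
  intros Hb P; rewrite (Hb P); unfold on_boundary.
  split; intros [H | [H | H]]; apply on_seg_sym in H; tauto.
Qed.

Section Side.

Variables A B C X Y Z : pt.
Hypothesis boundary_XYZ : same_boundary A B C X Y Z.
Hypothesis XYZ : cross X Y Z <> 0.

Local Notation p := (sqrt3_cot X Y Z).
Local Notation q := (sqrt3_cot Y Z X).
Local Notation k := (Rabs (cross X Y Z)).

Lemma inscribed_apex P Q T : inscribed_eq_on A B C X Y P Q T ->
  exists w, area P Q T = k * w ^ 2 / (p + q) /\ (apex_fits p q w \/ apex_fits q p w).
Proof.
  intros (Heq & HP & HQ & _ & _ & HT).
  apply boundary_XYZ in HT as [HT | [HT | HT]].
  - exfalso; apply (equilateral_cross P Q T Heq).
    destruct HP as [u [_ ->]], HQ as [v [_ ->]], HT as [t [_ ->]].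
    unfold cross; simpl; ring.
  - destruct HT as [w [Hw ->]]; fold (lerp Y Z w).
    assert (YXZ : cross Y X Z <> 0) by (rewrite cross_swap; lra).
    destruct (equilateral_apex Y X Z YXZ P Q w) as [Hfit Harea]; auto using on_seg_sym.
    rewrite (sqrt3_cot_swap Y X Z), (sqrt3_cot_swap X Z Y) in Hfit, Harea.
    rewrite (cross_swap X Y Z), Rabs_Ropp, Rplus_comm in Harea.
    exists w; split; [exact Harea | right; exact Hfit].
  - apply on_seg_sym in HT; destruct HT as [w [Hw ->]]; fold (lerp X Z w).
    destruct (equilateral_apex X Y Z XYZ P Q w) as [Hfit Harea]; auto.
    exists w; split; [exact Harea | left; exact Hfit].
Qed.

Lemma max_area_on_corner : 1 <= p -> (1 <= q -> p <= q) ->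
  max_area_on A B C X Y (k * max_area_scaled p q).
Proof.
  intros Hp Hpq.
  assert (Hr := cot_sum_pos X Y Z XYZ).
  assert (Hk : 0 < k) by now apply Rabs_pos_lt.
  split.
  - assert (Hfit := apex_fits_reach p q Hp Hr).
    destruct (equilateral_apex_exists X Y Z XYZ (apex_reach p q) Hfit)
      as (P & Q & HP & HQ & Heq & Harea).
    exists P, Q, (lerp X Z (apex_reach p q)).
    split; [|rewrite Harea; unfold max_area_scaled; field; lra].
    destruct Hfit as (Hw & _).
    split; [exact Heq|]; split; [exact HP|]; split; [exact HQ|].
    split; [|split]; apply boundary_XYZ; [left; exact HP | left; exact HQ |].
    right; right; apply on_seg_sym, on_seg_lerp; lra.
  - intros P Q T HI.
    destruct (inscribed_apex P Q T HI) as (w & -> & Hfit).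
    assert (Hfit' : apex_fits p q w).
    { destruct Hfit as [Hfit | Hfit]; [exact Hfit|].
      apply apex_fits_swap; [exact Hp | apply Hpq, Hfit | exact Hfit]. }
    assert (Hw := apex_fits_le_reach _ _ _ Hfit'); destruct Hfit' as ([Hw0 _] & _).
    unfold max_area_scaled.
    replace (k * w ^ 2 / (p + q)) with (k / (p + q) * w ^ 2) by (field; lra).
    replace (k * (apex_reach p q ^ 2 / (p + q))) with (k / (p + q) * apex_reach p q ^ 2)
      by (field; lra).
    apply Rmult_le_compat_l; [apply Rlt_le, Rdiv_lt_0_compat; lra|].
    apply pow_incr; lra.
Qed.

Lemma admits_corner : admits A B C X Y -> 1 <= p \/ 1 <= q.
Proof.
  intros (P & Q & T & HI).
  destruct (inscribed_apex P Q T HI) as (w & _ & [(_ & Hp & _) | (_ & Hq & _)]); auto.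
Qed.

End Side.

Lemma max_area_on_corner_right A B C X Y Z :
  same_boundary A B C X Y Z -> cross X Y Z <> 0 ->
  1 <= sqrt3_cot Y Z X -> (1 <= sqrt3_cot X Y Z -> sqrt3_cot Y Z X <= sqrt3_cot X Y Z) ->
  max_area_on A B C X Y
    (Rabs (cross X Y Z) * max_area_scaled (sqrt3_cot Y Z X) (sqrt3_cot X Y Z)).
Proof.
  intros Hb HK Hq Hqp.
  assert (YXZ : cross Y X Z <> 0) by (rewrite cross_swap; lra).
  pose proof (max_area_on_corner A B C Y X Z (same_boundary_swap _ _ _ _ _ _ Hb) YXZ) as H.
  rewrite (cross_swap X Y Z), Rabs_Ropp, (sqrt3_cot_swap Y X Z), (sqrt3_cot_swap X Z Y) in H.
  apply max_area_on_swap, H; assumption.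
Qed.

(** * Angles through their cotangents *)

Lemma acos_lt_acos a b : -1 <= a <= 1 -> -1 <= b <= 1 -> acos a < acos b -> b < a.
Proof.
  intros Ha Hb H; rewrite <- (cos_acos a Ha), <- (cos_acos b Hb).
  apply cos_decreasing_1; auto using Rlt_le; apply acos_bound.
Qed.

Lemma acos_lt_iff a b : -1 <= a <= 1 -> -1 <= b <= 1 -> acos a < acos b <-> b < a.
Proof.
  intros Ha Hb; split; [apply acos_lt_acos; assumption|].
  intro Hba; destruct (Rtotal_order (acos a) (acos b)) as [H | [H | H]]; [exact H | |].
  - apply (f_equal cos) in H; rewrite cos_acos, cos_acos in H; lra.
  - apply acos_lt_acos in H; lra.
Qed.

Definition angle_of_cot3 (p : R) : R := acos (p / sqrt (p ^ 2 + 3)).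

Lemma cot3_ratio_bound p : -1 < p / sqrt (p ^ 2 + 3) < 1.
Proof.
  assert (Hs : 0 < sqrt (p ^ 2 + 3)) by (apply sqrt_lt_R0; nra).
  assert (Hs2 : sqrt (p ^ 2 + 3) ^ 2 = p ^ 2 + 3) by (apply pow2_sqrt; nra).
  assert (Hr : p / sqrt (p ^ 2 + 3) * sqrt (p ^ 2 + 3) = p) by (field; lra).
  set (r := p / sqrt (p ^ 2 + 3)) in *; set (S := sqrt (p ^ 2 + 3)) in *.
  assert (Hr2 : r ^ 2 * (p ^ 2 + 3) = p ^ 2) by (rewrite <- Hs2, <- Hr; ring).
  assert (r ^ 2 < 1) by nra.
  split; nra.
Qed.

Lemma cot3_ratio_lt p q : p < q -> p / sqrt (p ^ 2 + 3) < q / sqrt (q ^ 2 + 3).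
Proof.
  intro Hpq.
  assert (Ha : 0 < sqrt (p ^ 2 + 3)) by (apply sqrt_lt_R0; nra).
  assert (Hb : 0 < sqrt (q ^ 2 + 3)) by (apply sqrt_lt_R0; nra).
  assert (Ha2 : sqrt (p ^ 2 + 3) ^ 2 = p ^ 2 + 3) by (apply pow2_sqrt; nra).
  assert (Hb2 : sqrt (q ^ 2 + 3) ^ 2 = q ^ 2 + 3) by (apply pow2_sqrt; nra).
  set (a := sqrt (p ^ 2 + 3)) in *; set (b := sqrt (q ^ 2 + 3)) in *.
  apply (Rmult_lt_reg_r (a * b)); [nra|].
  replace (p / a * (a * b)) with (p * b) by (field; lra).
  replace (q / b * (a * b)) with (q * a) by (field; lra).
  assert (Hsq : (q * a) ^ 2 - (p * b) ^ 2 = 3 * (q ^ 2 - p ^ 2))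
    by (replace ((q * a) ^ 2) with (q ^ 2 * a ^ 2) by ring;
        replace ((p * b) ^ 2) with (p ^ 2 * b ^ 2) by ring; rewrite Ha2, Hb2; ring).
  destruct (Rle_or_lt 0 p) as [Hp | Hp]; [|destruct (Rle_or_lt q 0) as [Hq | Hq]].
  - assert (0 <= p * b) by nra; assert (0 < q * a) by nra; nra.
  - assert (p * b < 0) by nra; assert (q * a <= 0) by nra; nra.
  - nra.
Qed.

Lemma angle_of_cot3_lt_iff p q : angle_of_cot3 p < angle_of_cot3 q <-> q < p.
Proof.
  unfold angle_of_cot3.
  pose proof (cot3_ratio_bound p) as Hp; pose proof (cot3_ratio_bound q) as Hq.
  rewrite acos_lt_iff by lra.
  split; [|apply cot3_ratio_lt].
  intro H; destruct (Rtotal_order q p) as [E | [E | E]]; [exact E | subst; lra |].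
  apply cot3_ratio_lt in E; lra.
Qed.

Lemma angle_of_cot3_inj p q : angle_of_cot3 p = angle_of_cot3 q -> p = q.
Proof.
  intro H; destruct (Rtotal_order p q) as [E | [E | E]]; [| exact E |];
    apply angle_of_cot3_lt_iff in E; lra.
Qed.

Lemma angle_of_cot3_1 : angle_of_cot3 1 = PI / 3.
Proof.
  unfold angle_of_cot3; replace (1 ^ 2 + 3) with (2 * 2) by ring.
  rewrite sqrt_square, <- cos_PI3 by lra.
  apply acos_cos; pose proof PI_RGT_0; lra.
Qed.

Lemma angle_of_cot3_m1 : angle_of_cot3 (-1) = 2 * PI / 3.
Proof.
  unfold angle_of_cot3; replace ((-1) ^ 2 + 3) with (2 * 2) by ring.
  rewrite sqrt_square by lra.
  replace (-1 / 2) with (cos (2 * PI / 3)).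
  - apply acos_cos; pose proof PI_RGT_0; lra.
  - replace (2 * PI / 3) with (PI - PI / 3) by field.
    rewrite Rtrigo_facts.cos_pi_minus, cos_PI3; field.
Qed.

Lemma angle_eq_of_cot3 V X Y : cross V X Y <> 0 ->
  angle V X Y = angle_of_cot3 (sqrt3_cot V X Y).
Proof.
  intro HK; unfold angle, angle_of_cot3; fold (dot V X Y); f_equal.
  assert (Hk : 0 < Rabs (cross V X Y)) by now apply Rabs_pos_lt.
  assert (Hn : 0 < dot V X Y ^ 2 + cross V X Y ^ 2).
  { assert (0 < cross V X Y ^ 2) by (rewrite <- pow2_abs; nra). nra. }
  assert (Hdist : dist V X * dist V Y = sqrt (dot V X Y ^ 2 + cross V X Y ^ 2)).
  { unfold dist; rewrite <- sqrt_mult_alt by (apply Rplus_le_le_0_compat; apply pow2_ge_0).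
    f_equal; unfold dot, cross; ring. }
  assert (Hcot : sqrt (sqrt3_cot V X Y ^ 2 + 3) =
                 sqrt 3 / Rabs (cross V X Y) * sqrt (dot V X Y ^ 2 + cross V X Y ^ 2)).
  { rewrite <- (sqrt_pow2 (sqrt 3 / Rabs (cross V X Y)))
      by (apply Rlt_le, Rdiv_lt_0_compat; [apply sqrt3_pos | exact Hk]).
    rewrite <- sqrt_mult_alt by apply pow2_ge_0; f_equal.
    unfold sqrt3_cot; rewrite <- (pow2_abs (cross V X Y)).
    field_simplify; [rewrite sqrt3_sq; reflexivity | lra | lra]. }
  assert (Hsq : 0 < sqrt (dot V X Y ^ 2 + cross V X Y ^ 2)) by (apply sqrt_lt_R0; exact Hn).
  rewrite Hdist, Hcot; unfold sqrt3_cot.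
  assert (Hs := sqrt3_pos); field; lra.
Qed.

(** * Triangles with a > b > c *)

Lemma sqdist_lt_of_dist_lt P Q P' Q' : dist P Q < dist P' Q' -> sqdist P Q < sqdist P' Q'.
Proof.
  intro H; destruct (Rlt_or_le (sqdist P Q) (sqdist P' Q')) as [Hlt | Hle]; [exact Hlt|].
  apply sqrt_le_1_alt in Hle; unfold dist in H; fold (sqdist P Q) (sqdist P' Q') in H; lra.
Qed.

Lemma Rdiv_sub_Rdiv a b c d : b <> 0 -> d <> 0 -> a / b - c / d = (a * d - c * b) / (b * d).
Proof. intros Hb Hd; field; split; assumption. Qed.

Definition ordered_triangle (A B C : pt) : Prop :=
  ~ collinear A B C /\ dist B C > dist C A /\ dist C A > dist A B.

Section OrderedTriangle.

Variables A B C : pt.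
Hypothesis ABC : ordered_triangle A B C.

Local Notation x := (sqrt3_cot A B C).
Local Notation y := (sqrt3_cot B C A).
Local Notation z := (sqrt3_cot C A B).
Local Notation k := (Rabs (cross A B C)).

Lemma ordered_cross : cross A B C <> 0.
Proof. apply ABC. Qed.

Lemma k_pos : 0 < k.
Proof. apply Rabs_pos_lt, ordered_cross. Qed.

Lemma ordered_cots : x < y /\ y < z /\ 0 < x + y.
Proof.
  destruct ABC as (HK & Hab & Hbc).
  assert (Hk := k_pos).
  assert (Ha := sqdist_cot B C A); assert (Hb := sqdist_cot C A B);
    assert (Hc := sqdist_cot A B C HK).
  rewrite (cross_rot A B C) in Ha; rewrite (cross_rot B C A), (cross_rot A B C) in Hb.
  specialize (Ha HK); specialize (Hb HK).
  apply sqdist_lt_of_dist_lt in Hab, Hbc.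
  assert (HL := sqdist_pos_of_cross A B C HK).
  assert (Hs := sqrt3_pos).
  split; [|split]; nra.
Qed.

Lemma cot_identity : x * y + y * z + z * x = 3.
Proof. apply sqrt3_cot_identity, ordered_cross. Qed.

Lemma cot_A_lt_1 : x < 1.
Proof.
  assert (H := cot_identity); destruct ordered_cots as (Hxy & Hyz & Hpos).
  destruct (Rlt_or_le x 1) as [Hx | Hx]; [exact Hx|]; nra.
Qed.

Lemma cot_C_gt_1 : 1 < z.
Proof.
  assert (H := cot_identity); assert (Hx := cot_A_lt_1).
  destruct ordered_cots as (Hxy & Hyz & Hpos).
  destruct (Rlt_or_le 1 z) as [Hz | Hz]; [exact Hz|]; nra.
Qed.

Lemma cot_B_gt_1_of_cot_A_le_m1 : x <= -1 -> 1 < y.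
Proof.
  intro Hx; assert (H := cot_identity); assert (Hz := cot_C_gt_1).
  destruct ordered_cots as (Hxy & Hyz & Hpos).
  assert (E : (y - 1) * (z - 1) = 4 - (x + 1) * (y + z)) by lra.
  nra.
Qed.

Lemma max_area_a_of_cot_B_ge_1 : 1 <= y -> max_area_on A B C B C (k / (y + z)).
Proof.
  intro Hy; assert (Hz := cot_C_gt_1); destruct ordered_cots as (Hxy & Hyz & Hpos).
  assert (H := max_area_on_corner A B C B C A); rewrite (cross_rot A B C) in H.
  replace (k / (y + z)) with (k * max_area_scaled y z)
    by (rewrite max_area_scaled_full by lra; field; lra).
  apply H; [intro P; unfold on_boundary; tauto | apply ordered_cross | exact Hy | intros; lra].
Qed.

Lemma max_area_a_of_cot_B_lt_1 : y < 1 -> max_area_on A B C B C (k * (y + z) / (z + 1) ^ 2).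
Proof.
  intro Hy; assert (Hz := cot_C_gt_1); destruct ordered_cots as (Hxy & Hyz & Hpos).
  assert (H := max_area_on_corner_right A B C B C A); rewrite (cross_rot A B C) in H.
  replace (k * (y + z) / (z + 1) ^ 2) with (k * max_area_scaled z y)
    by (rewrite max_area_scaled_partial by lra; field; lra).
  apply H; [intro P; unfold on_boundary; tauto | apply ordered_cross | lra | intros; lra].
Qed.

Lemma max_area_b : max_area_on A B C C A (k * (z + x) / (z + 1) ^ 2).
Proof.
  assert (Hz := cot_C_gt_1); assert (Hx := cot_A_lt_1).
  destruct ordered_cots as (Hxy & Hyz & Hpos).
  assert (H := max_area_on_corner A B C C A B).
  rewrite (cross_rot B C A), (cross_rot A B C) in H.
  replace (k * (z + x) / (z + 1) ^ 2) with (k * max_area_scaled z x)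
    by (rewrite max_area_scaled_partial by lra; field; lra).
  apply H; [intro P; unfold on_boundary; tauto | apply ordered_cross | lra | intros; lra].
Qed.

Lemma max_area_c : 1 <= y -> max_area_on A B C A B (k * (x + y) / (y + 1) ^ 2).
Proof.
  intro Hy; assert (Hx := cot_A_lt_1).
  destruct ordered_cots as (Hxy & Hyz & Hpos).
  replace (k * (x + y) / (y + 1) ^ 2) with (k * max_area_scaled y x)
    by (rewrite max_area_scaled_partial by lra; field; lra).
  apply max_area_on_corner_right; [intro P; tauto | apply ordered_cross | exact Hy | intros; lra].
Qed.

Lemma admits_c : admits A B C A B -> 1 <= y.
Proof.
  intro Had; assert (Hx := cot_A_lt_1).
  destruct (admits_corner A B C A B C (fun P => iff_refl _) ordered_cross Had); lra.
Qed.

Lemma max_area_a_exists : exists ma, max_area_on A B C B C ma.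
Proof.
  destruct (Rle_or_lt 1 y) as [Hy | Hy];
    eexists; [apply max_area_a_of_cot_B_ge_1 | apply max_area_a_of_cot_B_lt_1]; exact Hy.
Qed.

Lemma max_area_b_lt_a ma mb :
  max_area_on A B C B C ma -> max_area_on A B C C A mb -> mb < ma.
Proof.
  intros Hma Hmb; rewrite (max_area_on_unique _ _ _ _ _ _ _ Hmb max_area_b).
  assert (Hk := k_pos); assert (Hz := cot_C_gt_1); destruct ordered_cots as (Hxy & Hyz & Hpos).
  assert (Hk3 : k * (x * y + y * z + z * x) = k * 3) by now rewrite cot_identity.
  apply Rminus_lt; destruct (Rle_or_lt 1 y) as [Hy | Hy].
  - rewrite (max_area_on_unique _ _ _ _ _ _ _ Hma (max_area_a_of_cot_B_ge_1 Hy)).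
    rewrite Rdiv_sub_Rdiv by nra.
    replace (k * (z + x) * (y + z) - k * (z + 1) ^ 2) with (2 * k * (1 - z)) by lra.
    apply Rdiv_neg_pos; nra.
  - rewrite (max_area_on_unique _ _ _ _ _ _ _ Hma (max_area_a_of_cot_B_lt_1 Hy)).
    rewrite Rdiv_sub_Rdiv by nra.
    replace (k * (z + x) * (z + 1) ^ 2 - k * (y + z) * (z + 1) ^ 2)
      with (k * (z + 1) ^ 2 * (x - y)) by ring.
    assert (0 < k * (z + 1) ^ 2) by nra.
    apply Rdiv_neg_pos; nra.
Qed.

Lemma max_area_c_sub_a ma mc :
  max_area_on A B C B C ma -> max_area_on A B C A B mc ->
  mc - ma = 2 * k * (1 - y) / ((y + 1) ^ 2 * (y + z)).
Proof.
  intros Hma Hmc; assert (Hy := admits_c (max_area_on_admits _ _ _ _ _ _ Hmc)).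
  rewrite (max_area_on_unique _ _ _ _ _ _ _ Hma (max_area_a_of_cot_B_ge_1 Hy)),
    (max_area_on_unique _ _ _ _ _ _ _ Hmc (max_area_c Hy)).
  assert (Hz := cot_C_gt_1).
  assert (Hk3 : k * (x * y + y * z + z * x) = k * 3) by now rewrite cot_identity.
  rewrite Rdiv_sub_Rdiv by nra; f_equal; lra.
Qed.

Lemma max_area_c_sub_b mb mc :
  max_area_on A B C C A mb -> max_area_on A B C A B mc ->
  mc - mb = 2 * k * (z - y) * (x + 1) / ((y + 1) ^ 2 * (z + 1) ^ 2).
Proof.
  intros Hmb Hmc; assert (Hy := admits_c (max_area_on_admits _ _ _ _ _ _ Hmc)).
  rewrite (max_area_on_unique _ _ _ _ _ _ _ Hmb max_area_b),
    (max_area_on_unique _ _ _ _ _ _ _ Hmc (max_area_c Hy)).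
  assert (Hz := cot_C_gt_1).
  assert (Hk3 : k * (z - y) * (x * y + y * z + z * x) = k * (z - y) * 3)
    by now rewrite cot_identity.
  rewrite Rdiv_sub_Rdiv by nra; f_equal; lra.
Qed.

Lemma max_area_c_lt_a ma mc :
  1 < y -> max_area_on A B C B C ma -> max_area_on A B C A B mc -> mc < ma.
Proof.
  intros Hy Hma Hmc; apply Rminus_lt; rewrite (max_area_c_sub_a ma mc Hma Hmc).
  assert (Hk := k_pos); assert (Hz := cot_C_gt_1).
  apply Rdiv_neg_pos; nra.
Qed.

Lemma max_area_c_eq_a ma mc :
  y = 1 -> max_area_on A B C B C ma -> max_area_on A B C A B mc -> mc = ma.
Proof.
  intros Hy Hma Hmc; apply Rminus_diag_uniq; rewrite (max_area_c_sub_a ma mc Hma Hmc), Hy.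
  unfold Rdiv; ring.
Qed.

Lemma max_area_c_lt_b mb mc :
  x < -1 -> max_area_on A B C C A mb -> max_area_on A B C A B mc -> mc < mb.
Proof.
  intros Hx Hmb Hmc; apply Rminus_lt; rewrite (max_area_c_sub_b mb mc Hmb Hmc).
  assert (Hk := k_pos); assert (Hz := cot_C_gt_1); destruct ordered_cots as (Hxy & Hyz & Hpos).
  assert (0 < (y + 1) ^ 2 * (z + 1) ^ 2) by (apply Rmult_lt_0_compat; apply pow_lt; lra).
  apply Rdiv_neg_pos; [|lra].
  assert (0 < 2 * k * (z - y)) by nra; nra.
Qed.

Lemma max_area_c_eq_b mb mc :
  x = -1 -> max_area_on A B C C A mb -> max_area_on A B C A B mc -> mc = mb.
Proof.
  intros Hx Hmb Hmc; apply Rminus_diag_uniq; rewrite (max_area_c_sub_b mb mc Hmb Hmc), Hx.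
  unfold Rdiv; ring.
Qed.

Lemma max_area_b_lt_c mb mc :
  -1 < x -> max_area_on A B C C A mb -> max_area_on A B C A B mc -> mb < mc.
Proof.
  intros Hx Hmb Hmc; apply Rminus_gt; rewrite (max_area_c_sub_b mb mc Hmb Hmc).
  assert (Hk := k_pos); assert (Hz := cot_C_gt_1); destruct ordered_cots as (Hxy & Hyz & Hpos).
  assert (0 < (y + 1) ^ 2 * (z + 1) ^ 2) by (apply Rmult_lt_0_compat; apply pow_lt; lra).
  apply Rdiv_lt_0_compat; [|lra].
  assert (0 < 2 * k * (z - y)) by nra; nra.
Qed.

End OrderedTriangle.

Theorem mainTheorem1 (A B C : pt) :
  ~ collinear A B C ->
  dist B C > dist C A -> dist C A > dist A B ->
  let alpha := angle A B C in
  let beta := angle B C A in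
  (* existence of T_a, T_b, and T_c when side c admits one *)
  (exists ma, max_area_on A B C B C ma) /\
  (exists mb, max_area_on A B C C A mb) /\
  (admits A B C A B -> exists mc, max_area_on A B C A B mc) /\
  (forall ma mb, max_area_on A B C B C ma -> max_area_on A B C C A mb ->
    (* (Max) *)
    (beta <> PI / 3 ->
       mb < ma /\ (forall mc, max_area_on A B C A B mc -> mc < ma)) /\
    (beta = PI / 3 ->
       exists mc, max_area_on A B C A B mc /\ mc = ma /\ mb < ma) /\
    (* (Min) A *)
    (alpha > 2 * PI / 3 ->
       exists mc, max_area_on A B C A B mc /\ mc < mb /\ mc < ma) /\
    (alpha = 2 * PI / 3 ->
       exists mc, max_area_on A B C A B mc /\ mc = mb /\ mb < ma) /\
    (* (Min) B *)
    (PI / 3 < alpha < 2 * PI / 3 -> beta < PI / 3 ->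
       mb < ma /\ (forall mc, max_area_on A B C A B mc -> mb < mc)) /\
    (* (Min) C *)
    (beta >= PI / 3 ->
       mb < ma /\ (forall mc, max_area_on A B C A B mc -> mb < mc))).
Proof.
  intros Hcol Hab Hbc alpha beta.
  assert (T : ordered_triangle A B C) by (split; [|split]; assumption).
  assert (Hbeta : beta = angle_of_cot3 (sqrt3_cot B C A))
    by (apply angle_eq_of_cot3; rewrite cross_rot; exact Hcol).
  assert (Halpha : alpha = angle_of_cot3 (sqrt3_cot A B C)) by now apply angle_eq_of_cot3.
  rewrite Halpha, Hbeta, <- angle_of_cot3_1, <- angle_of_cot3_m1.
  split; [exact (max_area_a_exists A B C T)|].
  split; [exact (ex_intro _ _ (max_area_b A B C T))|].
  split; [intro Had; exact (ex_intro _ _ (max_area_c A B C T (admits_c A B C T Had)))|].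
  intros ma mb Hma Hmb.
  assert (Hba := max_area_b_lt_a A B C T ma mb Hma Hmb).
  assert (HxB := cot_B_gt_1_of_cot_A_le_m1 A B C T).
  split; [|split; [|split; [|split; [|split]]]].
  - intros Hne; split; [exact Hba|]; intros mc Hmc.
    destruct (admits_c A B C T (max_area_on_admits _ _ _ _ _ _ Hmc)) as [Hy | Hy].
    + exact (max_area_c_lt_a A B C T ma mc Hy Hma Hmc).
    + exfalso; apply Hne; rewrite <- Hy; reflexivity.
  - intro Heq; apply angle_of_cot3_inj in Heq.
    assert (Hmc := max_area_c A B C T (Req_le _ _ (eq_sym Heq))).
    eexists; split; [exact Hmc|].
    split; [exact (max_area_c_eq_a A B C T _ _ Heq Hma Hmc) | exact Hba].
  - intro Hgt; apply Rgt_lt in Hgt; rewrite angle_of_cot3_lt_iff in Hgt.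
    assert (Hmc := max_area_c A B C T (Rlt_le _ _ (HxB (Rlt_le _ _ Hgt)))).
    assert (Hcb := max_area_c_lt_b A B C T _ _ Hgt Hmb Hmc).
    eexists; split; [exact Hmc | split; [exact Hcb | lra]].
  - intro Heq; apply angle_of_cot3_inj in Heq.
    assert (Hmc := max_area_c A B C T (Rlt_le _ _ (HxB (Req_le _ _ Heq)))).
    eexists; split; [exact Hmc|].
    split; [exact (max_area_c_eq_b A B C T _ _ Heq Hmb Hmc) | exact Hba].
  - intros [_ Hlt] _; rewrite angle_of_cot3_lt_iff in Hlt.
    split; [exact Hba|]; intros mc Hmc; exact (max_area_b_lt_c A B C T _ _ Hlt Hmb Hmc).
  - intro Hge; split; [exact Hba|]; intros mc Hmc.
    apply (max_area_b_lt_c A B C T _ _); [|assumption..].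
    destruct (Rlt_or_le (-1) (sqrt3_cot A B C)) as [Hx | Hx]; [exact Hx | exfalso].
    assert (Hlt := proj2 (angle_of_cot3_lt_iff _ 1) (HxB Hx)); lra.
Qed.
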